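(* (a) For every $k\ge 3$, on the range $F_k\le n<F_{k+1}$ the sequence $a(n)$ attains its minimum uniquely at $n=F_k$, i.e., $a(t)>a(F_k)$ for all $F_k<t<F_{k+1}$. (b) For every $k\ge 5$, on the range $F_k\le n<F_{k+1}$ the sequence $a(n)$ attains its maximum exactly at $n=F_k+1$ and $n=F_k+2$; in particular $a(F_k+1)=a(F_k+2)\ge a(t)$ for all $F_k\le t<F_{k+1}$, with equality only for $t\in\{F_k+1,F_k+2\}$.
   Context: Let $(F_n)_{n\ge 0}$ be the Fibonacci numbers: $F_0=0$, $F_1=1$, $F_n=F_{n-1}+F_{n-2}$ for $n\ge 2$. Define $(a(n))_{n\ge 0}$ (OEIS A105774) by $a(0)=0$, $a(1)=1$, and for $n\ge 2$, $a(n)=F_{j+1}-a(n-F_j)$, where $j\ge 2$ is the unique index with $F_j<n\le F_{j+1}$. *)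

From mathcomp Require Import all_boot all_order all_algebra.
Import GRing.Theory.
Local Open Scope ring_scope.

Fixpoint fib (n : nat) : nat :=
  match n with
  | 0 => 0
  | 1 => 1
  | (m.+1 as p).+1 => fib p + fib m
  end.

(* For n >= 2, the unique j >= 2 with F_j < n <= F_{j+1}:
   it is the least j >= 2 with n <= F_{j+1} (searched below n+2, which suffices
   since F_{j+1} >= j for j >= 1). *)
Definition fib_index (n : nat) : nat :=
  (2 + find (fun i => (n <= fib (i + 3))%N) (iota 0 n))%N.

(* a with fuel: a_fuel fuel n computes a(n) when fuel > n. *)
Fixpoint a_fuel (fuel : nat) (n : nat) : int :=
  match fuel with
  | 0 => 0
  | fuel'.+1 =>
    match n with
    | 0 => 0
    | 1 => 1
    | _ => (fib (fib_index n).+1)%:Z - a_fuel fuel' (n - fib (fib_index n))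
    end
  end.

(* OEIS A105774: a(0)=0, a(1)=1, a(n) = F_{j+1} - a(n - F_j) for n >= 2,
   where F_j < n <= F_{j+1}, j >= 2. *)
Definition a (n : nat) : int := a_fuel n.+1 n.

From mathcomp Require Import all_boot all_order all_algebra.
From mathcomp Require Import zify.
Import Order.TTheory GRing.Theory Num.Theory.
Local Open Scope ring_scope.

(* On the block F_j < n <= F_{j+1} (j >= 2) the recursion gives
   F_j <= a(n) < F_{j+1}, by induction, since the remainder n - F_j lies in
   (0, F_{j-1}] and so has a(n - F_j) in [1, F_{j-1}].  Hence a(F_k) < F_k,
   lying in the previous block, while a(t) >= F_k on F_k < t < F_{k+1}: this
   is (a).  On that open block a(t) = F_{k+1} - a(t - F_k), and a(r) = 1
   exactly for r in {1, 2} (a(r) >= 2 for r >= 3): this is (b). *)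

Lemma fibSS n : fib n.+2 = (fib n.+1 + fib n)%N.
Proof. by []. Qed.

Lemma fib_gt0 n : (0 < n)%N -> (0 < fib n)%N.
Proof. by case: n => // n _; elim: n => [|n IH] //; rewrite fibSS; lia. Qed.

Lemma fib_monotone : {homo fib : m n / (m <= n)%N}.
Proof.
apply: homo_leq => [//|m n p|n]; first exact: leq_trans.
by case: n => [|n] //; rewrite fibSS; lia.
Qed.

Lemma fib_ltS n : (2 <= n)%N -> (fib n < fib n.+1)%N.
Proof. by case: n => [|[|n]] // _; rewrite (fibSS n.+1); have := fib_gt0 n.+1 isT; lia. Qed.

Lemma fib_ge2 n : (3 <= n)%N -> (2 <= fib n)%N.
Proof. exact: (@fib_monotone 3). Qed.

Lemma leq_fibS n : (n <= fib n.+1)%N.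
Proof.
suff : (n <= fib n.+1)%N /\ (n.+1 <= fib n.+2)%N by case.
elim: n => [|n [IH1 IH2]] //; split => //.
by rewrite (fibSS n.+1); have := fib_gt0 n.+1 isT; case: n IH1 IH2 => [|n] /=; lia.
Qed.

Lemma fib_index_unique {n j} : (2 <= j)%N -> (fib j < n <= fib j.+1)%N ->
  fib_index n = j.
Proof.
move=> j_ge2 /andP[lt_n le_n].
have n_ge2 : (2 <= n)%N by have := fib_gt0 j (ltnW j_ge2); lia.
set p := fun i => (n <= fib (i + 3))%N.
have p_n : p n.-1 by rewrite /p; have := leq_fibS n.+1; rewrite (_ : n.-1 + 3 = n.+2)%N; lia.
have p_j : p (j - 2)%N by rewrite /p (_ : j - 2 + 3 = j.+1)%N; lia.
have has_p : has p (iota 0 n) by apply/hasP; exists n.-1 => //; rewrite mem_iota; lia.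
have find_lt : (find p (iota 0 n) < n)%N by rewrite -[n in (_ < n)%N](size_iota 0 n) -has_find.
have p_find : p (find p (iota 0 n)) by have := nth_find 0 has_p; rewrite nth_iota.
have find_le : (find p (iota 0 n) <= j - 2)%N.
  rewrite leqNgt; apply/negP => lt_find.
  by have := before_find 0 lt_find; rewrite nth_iota ?p_j //; lia.
rewrite /fib_index -/p; set m := find p (iota 0 n) in find_lt p_find find_le *.
have : (j <= 2 + m)%N.
  rewrite leqNgt; apply/negP => lt_m.
  by have := fib_monotone (m + 3)%N j ltac:(lia); move: p_find; rewrite /p /=; lia.
lia.
Qed.

Lemma fib_block_exists {n} : (2 <= n)%N ->
  exists2 j, (2 <= j)%N & (fib j < n <= fib j.+1)%N.
Proof.
move=> n_ge2; elim: n n_ge2 => [|n IH] //; rewrite leq_eqVlt => /predU1P[<-|n_ge2].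
  by exists 2%N.
have [j j_ge2 /andP[lt_n le_n]] := IH n_ge2.
have [eq_n|ne_n] := eqVneq n (fib j.+1).
  exists j.+1; first lia.
  apply/andP; split; first lia.
  by rewrite fibSS; have := fib_gt0 j (ltnW j_ge2); lia.
by exists j => //; apply/andP; split; lia.
Qed.

Lemma a_fuel_SS f n : a_fuel f.+1 n.+2 =
  (fib (fib_index n.+2).+1)%:Z - a_fuel f (n.+2 - fib (fib_index n.+2)).
Proof. by []. Qed.

Lemma a_fuel_indep f g n : (n < f)%N -> (n < g)%N -> a_fuel f n = a_fuel g n.
Proof.
elim: f g n => [|f IH] [|g] [|[|n]] // lt_f lt_g.
have [j j_ge2 blk] := fib_block_exists (isT : (2 <= n.+2)%N).
rewrite !a_fuel_SS (fib_index_unique j_ge2 blk); congr (_ - _).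
by apply: IH; have := fib_gt0 j (ltnW j_ge2); lia.
Qed.

Lemma a_rec {n j} : (2 <= j)%N -> (fib j < n <= fib j.+1)%N ->
  a n = (fib j.+1)%:Z - a (n - fib j).
Proof.
move=> j_ge2 blk; have fib_j := fib_gt0 j (ltnW j_ge2).
case: n blk => [|[|n]] blk; try by move: blk; lia.
rewrite /a a_fuel_SS (fib_index_unique j_ge2 blk); congr (_ - _).
by apply: a_fuel_indep; lia.
Qed.

Lemma a1 : a 1 = 1. Proof. by []. Qed.

Lemma a_block_bounds {n j} : (2 <= j)%N -> (fib j < n <= fib j.+1)%N ->
  (fib j)%:Z <= a n /\ a n < (fib j.+1)%:Z.
Proof.
elim: n {-2}n (leqnn n) j => [|N IH] n le_nN j j_ge2 blk.
  by have := fib_gt0 j (ltnW j_ge2); lia.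
rewrite (a_rec j_ge2 blk).
have fibS_j : fib j.+1 = (fib j + fib j.-1)%N by case: j j_ge2 {blk} => [|[|j]].
have fib_j1 : (0 < fib j.-1)%N by apply: fib_gt0; lia.
suff : 1 <= a (n - fib j) /\ a (n - fib j) <= (fib j.-1)%:Z by lia.
have [r_eq1|r_ge2] := leqP (n - fib j) 1.
  by rewrite (_ : n - fib j = 1)%N ?a1; lia.
have [i i_ge2 blk_r] := fib_block_exists r_ge2.
have [] := IH (n - fib j)%N _ i i_ge2 blk_r; first by have := fib_gt0 j (ltnW j_ge2); lia.
have : (i < j.-1)%N by rewrite ltnNge; apply/negP => /fib_monotone; lia.
by move=> /fib_monotone; have := fib_gt0 i (ltnW i_ge2); lia.
Qed.

Lemma a_ge1 n : (1 <= n)%N -> 1 <= a n.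
Proof.
case: n => [|[|n]] // _; have [j j_ge2 blk] := fib_block_exists (isT : (2 <= n.+2)%N).
by have [+ _] := a_block_bounds j_ge2 blk; have := fib_gt0 j (ltnW j_ge2); lia.
Qed.

Lemma a_ge2 n : (3 <= n)%N -> 2 <= a n.
Proof.
move=> n_ge3; have [j j_ge2 blk] := fib_block_exists (ltnW n_ge3).
have j_ge3 : (3 <= j)%N by case: j j_ge2 blk => [|[|[|j]]] //= _; lia.
have [+ _] := a_block_bounds j_ge2 blk; have := fib_ge2 j j_ge3; lia.
Qed.

Lemma a_fib_lt k : (3 <= k)%N -> a (fib k) < (fib k)%:Z.
Proof.
case: k => [|k] // k_ge3.
have blk : (fib k < fib k.+1 <= fib k.+1)%N by rewrite leqnn fib_ltS //; lia.
by have [_] := a_block_bounds (j := k) ltac:(lia) blk.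
Qed.

Theorem proposition14 :
  (forall k : nat, (3 <= k)%N ->
     forall t : nat, (fib k < t < fib k.+1)%N -> a (fib k) < a t) /\
  (forall k : nat, (5 <= k)%N ->
     a (fib k + 1) = a (fib k + 2) /\
     forall t : nat, (fib k <= t < fib k.+1)%N ->
       a t <= a (fib k + 1) /\
       (a t = a (fib k + 1) -> t = (fib k + 1)%N \/ t = (fib k + 2)%N)).
Proof.
split=> [k k_ge3 t /andP[lt_t lt_t'] | k k_ge5].
  have [+ _] := a_block_bounds (j := k) ltac:(lia) (introT andP (conj lt_t (ltnW lt_t'))).
  by have := a_fib_lt k k_ge3; lia.
have fibS_k : fib k.+1 = (fib k + fib k.-1)%N by case: k k_ge5 => [|[|k]].
have fib_k1 : (2 <= fib k.-1)%N by apply: fib_ge2; lia.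
have a_block t : (fib k < t <= fib k.+1)%N -> a t = (fib k.+1)%:Z - a (t - fib k).
  by apply: a_rec; lia.
have a_top : a (fib k + 1) = (fib k.+1)%:Z - 1 by rewrite a_block ?addKn ?a1 //; lia.
rewrite a_top a_block ?addKn //; last by lia.
split=> // t /andP[le_t lt_t].
have [->|ne_tk] := eqVneq t (fib k).
  by have := a_fib_lt k ltac:(lia); split; lia.
rewrite a_block; last by lia.
have := a_ge1 (t - fib k) ltac:(lia); split=> [|eq_max]; first lia.
have [|r_ge3] := leqP (t - fib k) 2; first lia.
by have := a_ge2 _ r_ge3; lia.
Qed.
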